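(* Let $G=(S,C,\emptyset)$ be a spider graph with weight $r$ and empty head. If $G$ is thin ($r\ge2$), then $\tilde\gamma_{gr}^{\times2}(G)=2r$ and $(c_1,\dots,c_r,s_1,\dots,s_r)$ is an MDNS of $G$. If $G$ is thick ($r\ge3$), then $\tilde\gamma_{gr}^{\times2}(G)=r+2$ and $(s_1,\dots,s_r,c_1,c_2)$ is an MDNS of $G$.
   Context: Graphs are finite, simple, undirected; $N[v]$ closed neighborhood. A sequence of distinct vertices $(v_1,\dots,v_k)$ is a double neighborhood sequence (DNS) if for each $i$ some $w\in N[v_i]$ satisfies $|\{j<i:w\in N[v_j]\}|\le1$; an MDNS is a DNS of maximum length and $\tilde\gamma_{gr}^{\times2}$ is that length. A spider graph $(S,C,\emptyset)$ with weight $r$ has vertex set $S\cup C$ with $S=\{s_1,\dots,s_r\}$ stable and $C=\{c_1,\dots,c_r\}$ a clique; thin: $s_ic_j\in E$ iff $i=j$; thick: $s_ic_j\in E$ iff $i\neq j$. *)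

From mathcomp Require Import all_boot.
Set Implicit Arguments. Unset Strict Implicit. Unset Printing Implicit Defensive.

(* A graph on a finite type T is given by its adjacency relation e
   (for simple graphs: symmetric and irreflexive). *)

Definition cnbhd (T : finType) (e : rel T) (v : T) : {set T} :=
  [set w | (w == v) || e v w].

Definition dnsb (T : finType) (e : rel T) (s : seq T) : bool :=
  uniq s &&
  [forall i : 'I_(size s),
     [exists w in cnbhd e (tnth (in_tuple s) i),
        count (fun u => w \in cnbhd e u) (take i s) <= 1]].

Definition gamma_dns (T : finType) (e : rel T) : nat :=
  \max_(n < #|T|.+1 | [exists t : n.-tuple T, dnsb e t]) n.

Definition is_mdns (T : finType) (e : rel T) (s : seq T) : Prop :=
  dnsb e s /\ forall t : seq T, dnsb e t -> size t <= size s.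

(* Spider graph (S, C, empty) with weight r: vertex inl i = s_(i+1),
   inr i = c_(i+1). S stable, C a clique. *)
Definition spider_vertex (r : nat) : finType := ('I_r + 'I_r)%type.

Definition thin_spider (r : nat) : rel (spider_vertex r) :=
  fun x y => match x, y with
  | inl i, inr j => i == j
  | inr i, inl j => i == j
  | inr i, inr j => i != j
  | inl _, inl _ => false
  end.

Definition thick_spider (r : nat) : rel (spider_vertex r) :=
  fun x y => match x, y with
  | inl i, inr j => i != j
  | inr i, inl j => i != j
  | inr i, inr j => i != j
  | inl _, inl _ => false
  end.

Definition S_seq (r : nat) : seq (spider_vertex r) := [seq inl i | i <- enum 'I_r].
Definition C_seq (r : nat) : seq (spider_vertex r) := [seq inr i | i <- enum 'I_r].
Arguments thin_spider r : clear implicits.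
Arguments thick_spider r : clear implicits.
Arguments S_seq r : clear implicits.
Arguments C_seq r : clear implicits.

(* A vertex v may be appended to a double neighbourhood sequence p exactly when v is
   new and some w in N[v] has at most one dominator (a vertex u with w in N[u]) in p.

   In the thin spider the vertex s_i is dominated only by s_i and c_i, and every vertex
   is in the closed neighbourhood of some s_i; so every ordering of the 2r vertices is
   a DNS.

   In the thick spider every vertex has at least r dominators among the 2r vertices:
   all of C dominates c_m, and s_j together with the c_i (i <> j) dominates s_j.  The
   prefix before the last vertex of a DNS therefore has at most one dominator and at
   most r non-dominators of the witness, so a DNS has length at most r + 2.  The
   stable set s_1, ..., s_r followed by c_1 (witness s_2) and c_2 (witness s_1)
   attains this bound. *)

From mathcomp Require Import all_boot zify.

Set Implicit Arguments.
Unset Strict Implicit.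
Unset Printing Implicit Defensive.

Section DoubleNeighbourhoodSequences.
Variables (T : finType) (e : rel T).

Definition dominators (w : T) : {set T} := [set u | w \in cnbhd e u].

Lemma in_dominators (w u : T) : (u \in dominators w) = (w \in cnbhd e u).
Proof. by rewrite inE. Qed.

Definition dns_witnessed (p : seq T) (v : T) : bool :=
  [exists w in cnbhd e v, count [in dominators w] p <= 1].

Lemma dnsbE (x0 : T) (s : seq T) :
  dnsb e s = uniq s &&
    all (fun i => dns_witnessed (take i s) (nth x0 s i)) (iota 0 (size s)).
Proof.
have witnessedE p v : dns_witnessed p v =
    [exists w in cnbhd e v, count (fun u => w \in cnbhd e u) p <= 1].
  by apply: eq_existsb => w; congr (_ && (_ <= 1)); apply: eq_count => u; exact: in_dominators.
rewrite /dnsb; congr (_ && _); apply/forallP/allP => [H i | H i].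
  by rewrite mem_iota => lt_i_s; have := H (Ordinal lt_i_s); rewrite witnessedE (tnth_nth x0).
by have := H i; rewrite mem_iota ltn_ord witnessedE (tnth_nth x0); apply.
Qed.

Lemma dnsb_nil : dnsb e [::].
Proof. by apply/andP; split => //; apply/forallP => -[]. Qed.

Lemma dnsb_rcons (s : seq T) (v : T) :
  dnsb e (rcons s v) = [&& dnsb e s, v \notin s & dns_witnessed s v].
Proof.
rewrite !(dnsbE v) rcons_uniq size_rcons -addn1 iotaD all_cat /= andbT add0n.
rewrite nth_rcons ltnn eqxx -cats1 take_size_cat //.
have -> : all (fun i => dns_witnessed (take i (s ++ [:: v])) (nth v (s ++ [:: v]) i))
    (iota 0 (size s)) = all (fun i => dns_witnessed (take i s) (nth v s i)) (iota 0 (size s)).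
  apply: eq_in_all => i; rewrite mem_iota /= => lt_i_s.
  by rewrite takel_cat ?nth_cat ?lt_i_s // ltnW.
by case: (v \in s); case: (uniq s); case: all.
Qed.

Lemma dnsb_uniq (s : seq T) : dnsb e s -> uniq s.
Proof. by case/andP. Qed.

Lemma uniq_count_in_le_card (A : {set T}) (s : seq T) : uniq s -> count [in A] s <= #|A|.
Proof.
move=> s_uniq; rewrite -size_filter cardE.
by apply: uniq_leq_size => [|u]; rewrite ?filter_uniq // mem_filter mem_enum => /andP[].
Qed.

Lemma dns_witnessed_small_dominators (s : seq T) (v w : T) :
  uniq s -> v \notin s -> w \in cnbhd e v -> #|dominators w| <= 2 -> dns_witnessed s v.
Proof.
move=> s_uniq v_s w_v small_w; apply/existsP; exists w; rewrite w_v /=.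
have v_w : v \in dominators w by rewrite in_dominators.
have -> : count [in dominators w] s = count [in dominators w :\ v] s.
  apply: eq_in_count => u u_s.
  have u_v : u != v by apply: contraNneq v_s => <-.
  by rewrite !inE u_v.
apply: leq_trans (uniq_count_in_le_card _ s_uniq) _.
move: small_w; rewrite (cardsD1 v) v_w; lia.
Qed.

Lemma uniq_dnsb_small_dominators (s : seq T) :
  (forall v, exists2 w, w \in cnbhd e v & #|dominators w| <= 2) -> uniq s -> dnsb e s.
Proof.
move=> small; elim/last_ind: s => [|s v IHs]; first by rewrite dnsb_nil.
rewrite rcons_uniq dnsb_rcons => /andP[v_s s_uniq]; rewrite IHs // v_s /=.
by have [w] := small v; exact: dns_witnessed_small_dominators.
Qed.

Lemma stable_dnsb (s : seq T) : uniq s -> {in s &, forall u v, ~~ e u v} -> dnsb e s.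
Proof.
elim/last_ind: s => [|s v IHs]; first by rewrite dnsb_nil.
rewrite rcons_uniq dnsb_rcons => /andP[v_s s_uniq] stable.
have stable_s : {in s &, forall u v, ~~ e u v}.
  by move=> u u' u_s u'_s; apply: stable; rewrite mem_rcons inE ?u_s ?u'_s orbT.
rewrite IHs // v_s /=; apply/existsP; exists v; rewrite !inE eqxx /=.
rewrite (eq_in_count (a2 := pred0)) ?count_pred0 // => u u_s.
rewrite in_dominators !inE /=.
have -> : (v == u) = false by apply: contraNF v_s => /eqP ->.
by apply/negbTE/stable; rewrite mem_rcons !inE ?u_s ?eqxx ?orbT.
Qed.

Lemma dnsb_size_le_card (s : seq T) : dnsb e s -> size s <= #|T|.
Proof. by move/dnsb_uniq/card_uniqP <-; exact: max_card. Qed.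

Lemma dnsb_size_dominators (d : nat) (s : seq T) :
  (forall w, d <= #|dominators w|) -> dnsb e s -> size s <= #|T| - d + 2.
Proof.
move=> many; case/lastP: s => // p v.
rewrite dnsb_rcons size_rcons => /and3P[/dnsb_uniq p_uniq _ /existsP[w /andP[_ few_w]]].
have non_dominators : count (predC [in dominators w]) p <= #|T| - #|dominators w|.
  rewrite -(cardsC (dominators w)) addKn.
  rewrite (eq_count (a2 := [in ~: dominators w])) ?uniq_count_in_le_card // => u.
  by rewrite !inE.
have := count_predC [in dominators w] p; have := many w; lia.
Qed.

Lemma mdns_gamma_dns (s : seq T) : is_mdns e s -> gamma_dns e = size s.
Proof.
case=> s_dns s_max; apply/eqP; rewrite eqn_leq; apply/andP; split.
  by apply/bigmax_leqP => n /existsP[t /s_max]; rewrite size_tuple.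
have s_small : size s < #|T|.+1 by rewrite ltnS dnsb_size_le_card.
apply: (@leq_bigmax_cond _ _ _ (Ordinal s_small)).
by apply/existsP; exists (in_tuple s).
Qed.
End DoubleNeighbourhoodSequences.

Section Spiders.
Variable r : nat.

Lemma size_S_seq : size (S_seq r) = r.
Proof. by rewrite size_map size_enum_ord. Qed.

Lemma size_C_seq : size (C_seq r) = r.
Proof. by rewrite size_map size_enum_ord. Qed.

Lemma S_seq_uniq : uniq (S_seq r).
Proof. by rewrite map_inj_uniq ?enum_uniq // => i j []. Qed.

Lemma C_seq_uniq : uniq (C_seq r).
Proof. by rewrite map_inj_uniq ?enum_uniq // => i j []. Qed.

Lemma inr_notin_S_seq (i : 'I_r) : inr i \notin S_seq r.
Proof. by apply/mapP => -[]. Qed.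

Lemma card_spider_vertex : #|spider_vertex r| = r + r.
Proof. by rewrite card_sum !card_ord. Qed.

Lemma thin_spider_dominators_inl (k : 'I_r) :
  dominators (thin_spider r) (inl k) = [set inl k; inr k].
Proof. by apply/setP => -[j|j]; rewrite in_dominators !inE -!sum_eqE //= eq_sym. Qed.

Lemma thin_spider_uniq_dnsb (s : seq (spider_vertex r)) : uniq s -> dnsb (thin_spider r) s.
Proof.
apply: uniq_dnsb_small_dominators => v.
have inl_k_small k : #|dominators (thin_spider r) (inl k)| <= 2.
  by rewrite thin_spider_dominators_inl cards2.
by case: v => k; exists (inl k); rewrite // !inE -!sum_eqE /= eqxx.
Qed.

Lemma thin_spider_mdns : is_mdns (thin_spider r) (C_seq r ++ S_seq r).
Proof.
have CS_uniq : uniq (C_seq r ++ S_seq r).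
  rewrite cat_uniq C_seq_uniq S_seq_uniq andbT /=.
  by apply/hasPn => _ /mapP[i _ ->]; apply/mapP => -[].
split=> [|t /dnsb_size_le_card]; first exact: thin_spider_uniq_dnsb.
by rewrite size_cat size_C_seq size_S_seq card_spider_vertex.
Qed.

Lemma thick_spider_dominators_ge (w : spider_vertex r) :
  r <= #|dominators (thick_spider r) w|.
Proof.
(* f picks r distinct dominators of w: all of C, except that c_j is swapped for s_j when w = s_j. *)
pose f i : spider_vertex r := if w == inl i then inl i else inr i.
have f_inj : injective f by move=> i j; rewrite /f; do 2 case: ifP => _; congruence.
rewrite -[X in X <= _]card_ord -(card_imset _ f_inj); apply/subset_leq_card/subsetP.
move=> _ /imsetP[i _ ->]; rewrite in_dominators /f.
case: ifP => [/eqP ->|]; first by rewrite !inE eqxx.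
case: w {f f_inj} => [j|m]; rewrite !inE -!sum_eqE /= eq_sym; first by move=> ->.
by rewrite orbN.
Qed.

Lemma thick_spider_dnsb_size (s : seq (spider_vertex r)) :
  dnsb (thick_spider r) s -> size s <= r + 2.
Proof.
move/(dnsb_size_dominators thick_spider_dominators_ge).
by rewrite card_spider_vertex addnK.
Qed.

Lemma count_S_seq_thick_dominators (j : 'I_r) :
  count [in dominators (thick_spider r) (inl j)] (S_seq r) = 1.
Proof.
rewrite count_map (eq_count (a2 := pred1 j)) => [|i].
  by rewrite count_uniq_mem ?enum_uniq ?mem_enum.
by rewrite /= in_dominators !inE -!sum_eqE /= orbF eq_sym.
Qed.

Lemma thick_spider_dnsb (a b : 'I_r) :
  a != b -> dnsb (thick_spider r) (S_seq r ++ [:: inr a; inr b]).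
Proof.
move=> ab; have S_dnsb : dnsb (thick_spider r) (S_seq r).
  by apply: stable_dnsb S_seq_uniq _ => _ _ /mapP[i _ ->] /mapP[j _ ->].
rewrite -cat_rcons cats1 !dnsb_rcons S_dnsb.
rewrite inr_notin_S_seq mem_rcons inE -sum_eqE /= eq_sym (negbTE ab) inr_notin_S_seq /=.
apply/andP; split; apply/existsP.
  by exists (inl b); rewrite !inE /= ab count_S_seq_thick_dominators.
exists (inl a); rewrite !inE /= eq_sym ab -cats1 count_cat count_S_seq_thick_dominators.
by rewrite /= in_dominators !inE -!sum_eqE /= eqxx.
Qed.

Lemma thick_spider_mdns (a b : 'I_r) :
  a != b -> is_mdns (thick_spider r) (S_seq r ++ [:: inr a; inr b]).
Proof.
move=> ab; split=> [|t /thick_spider_dnsb_size]; first exact: thick_spider_dnsb.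
by rewrite size_cat size_S_seq.
Qed.
End Spiders.

Lemma take2_C_seq (r : nat) :
  2 <= r -> exists a b : 'I_r, a != b /\ take 2 (C_seq r) = [:: inr a; inr b].
Proof.
case: r => [|[|r]] // _; exists ord0, (lift ord0 ord0); split; first exact: neq_lift.
by rewrite /C_seq !enum_ordSl /= take0.
Qed.

Theorem lemma5 (r : nat) :
  (2 <= r ->
     gamma_dns (thin_spider r) = 2 * r /\
     is_mdns (thin_spider r) (C_seq r ++ S_seq r)) /\
  (3 <= r ->
     gamma_dns (thick_spider r) = r + 2 /\
     is_mdns (thick_spider r) (S_seq r ++ take 2 (C_seq r))).
Proof.
split=> [_ | r_ge3].
  have thin_mdns := thin_spider_mdns r.
  by split=> //; rewrite (mdns_gamma_dns thin_mdns) size_cat size_C_seq size_S_seq addnn -mul2n.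
have [a [b [ab ->]]] := take2_C_seq (ltnW r_ge3).
have thick_mdns := thick_spider_mdns ab.
by split=> //; rewrite (mdns_gamma_dns thick_mdns) size_cat size_S_seq.
Qed.
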